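(* Let $\mu$ be a joint distribution of a triple $(X,A,Y)$ with $X\in\mathcal{X}\subseteq\mathbb{R}^d$, $A\in\{0,1\}$ with $\Pr(A=0),\Pr(A=1)>0$, and $Y\in[-1,1]$. Let $g:\mathcal{X}\to\mathcal{Z}\subseteq\mathbb{R}^k$ be measurable and $Z=g(X)$, and suppose $W_1(g_\sharp\mu_0,g_\sharp\mu_1)\le\epsilon$. Let $h:\mathcal{Z}\to\mathbb{R}$ be $\rho$-Lipschitz, and suppose the densities (w.r.t. Lebesgue measure) of $(h\circ g)_\sharp\mu_0,(h\circ g)_\sharp\mu_1$ are bounded above by a constant $C$. Then $\widehat{Y}=(h\circ g)(X)$ satisfies $2\sqrt{C\rho\epsilon}$-statistical parity, i.e. $$\sup_{z\in\mathbb{R}}\left|\Pr_{\mu_0}(h(g(X))\le z)-\Pr_{\mu_1}(h(g(X))\le z)\right|\le2\sqrt{C\rho\epsilon}.$$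
   Context: For $a\in\{0,1\}$, $\mu_a$ is the conditional distribution of $X$ (and $Y$) given $A=a$; $g_\sharp\mu_a$ is the distribution of $g(X)$ under $\mu_a$. $W_1$ is the 1-Wasserstein distance with respect to the Euclidean norm. *)

From HB Require Import structures.
From mathcomp Require Import all_boot all_order all_algebra.
From mathcomp Require Import all_classical all_reals all_analysis.
Set Implicit Arguments. Unset Strict Implicit. Unset Printing Implicit Defensive.
Import Order.TTheory GRing.Theory Num.Theory.
Import numFieldNormedType.Exports.
Local Open Scope classical_set_scope.
Local Open Scope ring_scope.

(* Euclidean space R^n as row vectors, equipped with its Borel sigma-algebra
   (the sigma-algebra generated by the open sets of the product topology,
   which is the Euclidean topology). *)
Definition Rvec (R : realType) (n : nat) :=
  g_sigma_algebraType (@open 'rV[R]_n).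

Definition enorm (R : realType) (n : nat) (x : 'rV[R]_n) : R :=
  Num.sqrt (\sum_(i < n) x ord0 i ^+ 2).

Definition lipschitz_with (R : realType) (k : nat) (rho : R)
  (h : 'rV[R]_k -> R) : Prop :=
  0 <= rho /\ forall x y, `|h x - h y| <= rho * enorm (x - y).

(* Pr(E | A = a) on the underlying probability space: this is the measure
   mu_a (conditional distribution given A = a) evaluated on an event. *)
Definition condP (d : measure_display) (Omega : measurableType d)
  (R : realType) (P : probability Omega R) (A : Omega -> bool) (a : bool)
  (E : set Omega) : R :=
  fine (P (E `&` A @^-1` [set a])) / fine (P (A @^-1` [set a])).

Definition is_coupling (d : measure_display) (Omega : measurableType d)
  (R : realType) (P : probability Omega R) (A : Omega -> bool) (k : nat)
  (Z : Omega -> Rvec R k) (pi : probability (Rvec R k * Rvec R k)%type R) : Prop :=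
  forall B : set (Rvec R k), measurable B ->
    fine (pi (B `*` setT)) = condP P A false (Z @^-1` B) /\
    fine (pi (setT `*` B)) = condP P A true (Z @^-1` B).

Definition W1_cond (d : measure_display) (Omega : measurableType d)
  (R : realType) (P : probability Omega R) (A : Omega -> bool) (k : nat)
  (Z : Omega -> Rvec R k) : \bar R :=
  ereal_inf [set (\int[pi]_p (enorm (p.1 - p.2))%:E)%E
            | pi in [set pi : probability (Rvec R k * Rvec R k)%type R
                     | is_coupling P A Z pi]].

Definition cond_density_bounded (d : measure_display) (Omega : measurableType d)
  (R : realType) (P : probability Omega R) (A : Omega -> bool) (a : bool)
  (W : Omega -> R) (C : R) : Prop :=
  exists f : R -> R, measurable_fun setT f /\ (forall x, 0 <= f x <= C) /\
    forall B : set R, measurable B ->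
      ((condP P A a (W @^-1` B))%:E =
        \int[@lebesgue_measure R]_(x in B) (f x)%:E)%E.

From HB Require Import structures.
From mathcomp Require Import all_boot all_order all_algebra.
From mathcomp Require Import all_classical all_reals all_analysis.
From mathcomp Require Import ring lra measurable_realfun.
Set Implicit Arguments. Unset Strict Implicit. Unset Printing Implicit Defensive.
Import Order.TTheory GRing.Theory Num.Theory.
Import numFieldNormedType.Exports.
Import HBNNSimple.
Local Open Scope classical_set_scope.
Local Open Scope ring_scope.

(* For a coupling pi of g#mu_0 and g#mu_1 and t > 0, a pair (z1, z2) with
   h z1 <= z has either h z2 <= z + t or h z2 - h z1 > t; the latter forces
   rho |z1 - z2| > t.  Writing F_a for the CDF of h (g X) under mu_a,
   F_0(z) <= F_1(z) + Pr_1(z < h <= z + t) +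
   Pr_pi(rho |z1 - z2| > t) <= F_1(z) + C t + rho E_pi|z1 - z2| / t by the
   density bound and Markov's inequality, and symmetrically.  Taking pi nearly
   optimal gives |F_0(z) - F_1(z)| <= C t + rho eps / t, and t = sqrt(rho eps / C)
   gives 2 sqrt(C rho eps). *)

Lemma enorm_ge0 (R : realType) n (x : 'rV[R]_n) : 0 <= enorm x.
Proof. exact: sqrtr_ge0. Qed.

Lemma enorm_le_mx_norm (R : realType) n (x : 'rV[R]_n) : enorm x <= n%:R * `|x|.
Proof.
have x_le i : `|x ord0 i| <= `|x|.
  by rewrite [`|x|]mx_normrE; exact: (le_bigmax _ _ (ord0, i)).
rewrite /enorm -(ger0_norm (mulr_ge0 (ler0n _ n) (normr_ge0 x))) -sqrtr_sqr.
apply: ler_wsqrtr; apply: (le_trans (y := \sum_(i < n) `|x| ^+ 2)).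
- apply: ler_sum => i _; rewrite -real_normK ?num_real //.
  by rewrite lerXn2r ?nnegrE.
- rewrite sumr_const card_ord -[_ *+ n]mulr_natl exprMn.
  apply: ler_wpM2r; first exact: sqr_ge0.
  by rewrite -natrX ler_nat; case: n {x x_le} => // n; rewrite leq_pmulr.
Qed.

Lemma lipschitz_with_continuous (R : realType) k (rho : R) (h : 'rV[R]_k -> R) :
  lipschitz_with rho h -> continuous h.
Proof.
move=> [rho0 hL] x; apply/(@cvgrPdist_lt _ _ _ (nbhs x)) => e e0.
have L0 : 0 < rho * k%:R + 1 by rewrite ltr_pwDr // mulr_ge0.
have hL' y : `|h x - h y| <= (rho * k%:R + 1) * `|x - y|.
  apply: (le_trans (hL x y)).
  have := enorm_le_mx_norm (x - y); have := normr_ge0 (x - y); nra.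
near=> y; apply: le_lt_trans (hL' y) _; rewrite -ltr_pdivlMl //.
by near: y; apply: cvgr_dist_lt; [exact: cvg_id | rewrite mulr_gt0 ?invr_gt0].
Unshelve. all: by end_near. Qed.

Lemma continuous_open_sigma_measurable_fun (T : ptopologicalType) (R : realType)
  (f : T -> R) :
  continuous f -> measurable_fun setT (f : g_sigma_algebraType (@open T) -> R).
Proof.
move=> /continuousP f_open; apply: (measurability _ (RGenOpens.measurableE R)).
move=> _ [_ [a [b ->]] <-]; rewrite setTI.
by apply: sub_sigma_algebra; apply/f_open/interval_open.
Qed.

Lemma lipschitz_with_measurable_fun (R : realType) k (rho : R) (h : 'rV[R]_k -> R) :
  lipschitz_with rho h -> measurable_fun setT (h : Rvec R k -> R).
Proof.
by move=> /lipschitz_with_continuous; exact: continuous_open_sigma_measurable_fun.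
Qed.

Section level_sets.
Context d (T : measurableType d) (R : realType) (f : T -> R).
Hypothesis mf : measurable_fun setT f.

Lemma measurable_fun_le_set (b : R) : measurable [set x | f x <= b].
Proof.
rewrite -[X in measurable X]setTI.
exact: (measurable_fun_ler mf (measurable_cst b) measurableT (Y := [set true])).
Qed.

Lemma measurable_fun_lt_set (b : R) : measurable [set x | b < f x].
Proof.
rewrite -[X in measurable X]setTI.
exact: (measurable_fun_ltr (measurable_cst b) mf measurableT (Y := [set true])).
Qed.

Lemma measurable_fun_band_set (a b : R) : measurable [set x | a < f x <= b].
Proof.
rewrite (_ : mkset _ = [set x | a < f x] `&` [set x | f x <= b]).
  by apply: measurableI; [exact: measurable_fun_lt_set|exact: measurable_fun_le_set].
by apply/seteqP; split=> x /=; [move/andP|move=> [-> ->]].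
Qed.

End level_sets.

(* No measurability of [f] is needed: the integral of a nonnegative function
   is the supremum of the integrals of the simple functions below it. *)
Lemma markov_nonneg d (T : measurableType d) (R : realType)
  (mu : {measure set T -> \bar R}) (f : T -> R) (S : set T) (c : R) :
  measurable S -> 0 <= c -> (forall x, 0 <= f x) -> (forall x, S x -> c <= f x) ->
  (c%:E * mu S <= \int[mu]_x (f x)%:E)%E.
Proof.
move=> mS c0 f0 fS; rewrite ge0_integralE; last by move=> x _; rewrite lee_fin.
rewrite patch_setT; apply: ereal_sup_ubound => /=.
exists (scale_nnsfun (indic_nnsfun R mS) c0).
  move=> x /=; rewrite lee_fin; change (c * \1_S x <= f x); rewrite indicE.
  by case: (boolP (x \in S)) => [/set_mem /fS|_]; rewrite ?mulr1 ?mulr0.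
by rewrite -[X in X = _]/(sintegral mu (cst c \* indic_nnsfun R mS)%R) sintegralrM
  -[sintegral mu (indic_nnsfun R mS)]/(sintegral mu \1_S) sintegral_indic.
Qed.

Section probability_events.
Context d (T : measurableType d) (R : realType) (P : probability T R).

Lemma fine_probability_le_U2 (A B C : set T) :
  measurable A -> measurable B -> measurable C -> A `<=` B `|` C ->
  fine (P A) <= fine (P B) + fine (P C).
Proof.
move=> mA mB mC sABC; rewrite -lee_fin EFinD !fineK ?fin_num_measure //.
apply: le_trans (measureU2 _ mB mC).
by apply: le_measure => //; rewrite inE //; exact: measurableU.
Qed.

Lemma markov_scaled (c : T -> R) (S : set T) (a b : R) :
  measurable S -> 0 < a -> 0 <= b -> (forall x, 0 <= c x) ->
  (forall x, S x -> a <= b * c x) -> (\int[P]_x (c x)%:E)%E \is a fin_num ->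
  a * fine (P S) <= b * fine (\int[P]_x (c x)%:E)%E.
Proof.
move=> mS a0 b0 c0 cS cfin; have [b_eq0|b_neq0] := eqVneq b 0.
  suff -> : S = set0 by rewrite measure0 mulr0 b_eq0 mul0r.
  by apply/seteqP; split=> // x /cS; rewrite b_eq0 mul0r leNgt a0.
have bgt0 : 0 < b by rewrite lt_neqAle eq_sym b_neq0.
have cS' x : S x -> a / b <= c x by move/cS; rewrite ler_pdivrMr // mulrC.
have : ((a / b * fine (P S))%:E <= (fine (\int[P]_x (c x)%:E))%:E)%E.
  rewrite EFinM (fineK (fin_num_measure P S mS)) (fineK cfin).
  exact: markov_nonneg (divr_ge0 (ltW a0) b0) c0 cS'.
by rewrite lee_fin -(ler_pM2l bgt0) mulrA mulrCA divff ?mulr1 ?gt_eqF.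
Qed.

Lemma cdf_le_cdf_add_band (f1 f2 c : T -> R) (rho t z : R) :
  measurable_fun setT f1 -> measurable_fun setT f2 ->
  0 < t -> 0 <= rho -> (forall w, 0 <= c w) ->
  (forall w, `|f2 w - f1 w| <= rho * c w) ->
  (\int[P]_w (c w)%:E)%E \is a fin_num ->
  fine (P [set w | f1 w <= z]) <=
    fine (P [set w | f2 w <= z]) + fine (P [set w | z < f2 w <= z + t])
    + rho * fine (\int[P]_w (c w)%:E)%E / t.
Proof.
move=> mf1 mf2 t0 rho0 c0 gap cfin.
pose S := [set w | f1 w <= z] `&` [set w | z + t < f2 w].
have m1 := measurable_fun_le_set mf1; have m2 := measurable_fun_le_set mf2.
have mS : measurable S.
  by apply: measurableI; [exact: m1|exact: measurable_fun_lt_set].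
have mband := measurable_fun_band_set mf2 z (z + t).
have tail : fine (P S) <= rho * fine (\int[P]_w (c w)%:E)%E / t.
  rewrite ler_pdivlMr // mulrC; apply: markov_scaled => // w [/= f1z f2zt].
  by have := gap w; rewrite ler_norml => /andP[_]; lra.
have le_shift : fine (P [set w | f1 w <= z]) <=
    fine (P [set w | f2 w <= z + t]) + fine (P S).
  apply: fine_probability_le_U2 => // w f1z.
  by have [f2zt|f2zt] := leP (f2 w) (z + t); [left|right].
have le_band : fine (P [set w | f2 w <= z + t]) <=
    fine (P [set w | f2 w <= z]) + fine (P [set w | z < f2 w <= z + t]).
  apply: fine_probability_le_U2 => // w /= f2zt.
  by have [f2z|f2z] := leP (f2 w) z; [left|right; apply/andP].
lra.
Qed.

End probability_events.

Lemma cond_density_bounded_band d (Omega : measurableType d) (R : realType)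
  (P : probability Omega R) (A : Omega -> bool) (a : bool) (W : Omega -> R)
  (C z t : R) : 0 < t -> cond_density_bounded P A a W C ->
  condP P A a [set w | z < W w <= z + t] <= C * t.
Proof.
move=> t0 [f [mf [f0C Wf]]].
have mI : measurable `]z, z + t]%classic by exact: measurable_itv.
have -> : [set w | z < W w <= z + t] = W @^-1` `]z, z + t]%classic.
  by apply/seteqP; split => w /=; rewrite in_itv.
rewrite -lee_fin Wf //.
apply: le_trans.
  apply: (@ge0_le_integral _ _ _ lebesgue_measure _ mI _ (fun=> C%:E)).
  - by move=> x _; rewrite lee_fin; case/andP: (f0C x).
  - by apply/measurable_EFinP; exact: measurable_funS mf.
  - exact: measurable_cst.
  - by move=> x _; rewrite lee_fin; case/andP: (f0C x).
rewrite integral_cst // [X in (_ * X <= _)%E]lebesgue_measure_itv /= lte_fin ltrDl t0.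
by rewrite -EFinD -EFinM addrAC subrr add0r.
Qed.

Section couplings.
Context d (Omega : measurableType d) (R : realType) (P : probability Omega R)
  (A : Omega -> bool) (k : nat) (Z : Omega -> Rvec R k).

Lemma coupling_fst (pi : probability (Rvec R k * Rvec R k)%type R)
  (B : set (Rvec R k)) :
  is_coupling P A Z pi -> measurable B ->
  fine (pi (fst @^-1` B)) = condP P A false (Z @^-1` B).
Proof. by move=> piZ mB; rewrite -setXT; case: (piZ B mB). Qed.

Lemma coupling_snd (pi : probability (Rvec R k * Rvec R k)%type R)
  (B : set (Rvec R k)) :
  is_coupling P A Z pi -> measurable B ->
  fine (pi (snd @^-1` B)) = condP P A true (Z @^-1` B).
Proof. by move=> piZ mB; rewrite -setTX; case: (piZ B mB). Qed.

Lemma W1_cond_le_exists_coupling (eps dl : R) :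
  (W1_cond P A Z <= eps%:E)%E -> 0 < dl ->
  exists pi, [/\ is_coupling P A Z pi,
    (\int[pi]_p (enorm (p.1 - p.2))%:E)%E \is a fin_num &
    fine (\int[pi]_p (enorm (p.1 - p.2))%:E)%E <= eps + dl].
Proof.
move=> W1_le dl0.
have /ereal_inf_lt[_ [pi piZ <-] cost_lt] : (W1_cond P A Z < (eps + dl)%:E)%E.
  by apply: le_lt_trans W1_le _; rewrite lte_fin ltrDl.
have cost_ge0 : (0 <= \int[pi]_p (enorm (p.1 - p.2))%:E)%E.
  by apply: integral_ge0 => p _; rewrite lee_fin enorm_ge0.
have cost_fin : (\int[pi]_p (enorm (p.1 - p.2))%:E)%E \is a fin_num.
  by rewrite ge0_fin_numE // (lt_trans cost_lt) ?ltry.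
by exists pi; split => //; rewrite -lee_fin fineK // ltW.
Qed.

Lemma coupling_cdf_gap_le (pi : probability (Rvec R k * Rvec R k)%type R)
  (f : 'rV[R]_k -> R) (rho t z C : R) :
  is_coupling P A Z pi -> lipschitz_with rho f -> 0 < t ->
  (\int[pi]_p (enorm (p.1 - p.2))%:E)%E \is a fin_num ->
  (forall a, condP P A a [set w | z < f (Z w) <= z + t] <= C * t) ->
  `|condP P A false [set w | f (Z w) <= z] - condP P A true [set w | f (Z w) <= z]|
    <= C * t + rho * fine (\int[pi]_p (enorm (p.1 - p.2))%:E)%E / t.
Proof.
move=> piZ f_lip t0 cost_fin band_le; have [rho0 f_diff] := f_lip.
have mf := lipschitz_with_measurable_fun f_lip.
have mf1 := measurableT_comp mf (@measurable_fst _ _ (Rvec R k) (Rvec R k)).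
have mf2 := measurableT_comp mf (@measurable_snd _ _ (Rvec R k) (Rvec R k)).
have f_diffC p : `|f p.2 - f p.1| <= rho * enorm (p.1 - p.2).
  by rewrite distrC; exact: f_diff.
have := cdf_le_cdf_add_band z mf1 mf2 t0 rho0 (fun p => enorm_ge0 _) f_diffC cost_fin.
have := cdf_le_cdf_add_band z mf2 mf1 t0 rho0 (fun p => enorm_ge0 _)
  (fun p => f_diff p.1 p.2) cost_fin.
rewrite /= (coupling_fst piZ (measurable_fun_le_set mf z)).
rewrite (coupling_snd piZ (measurable_fun_le_set mf z)).
rewrite (coupling_fst piZ (measurable_fun_band_set mf z (z + t))).
rewrite (coupling_snd piZ (measurable_fun_band_set mf z (z + t))).
have := band_le false; have := band_le true; rewrite ler_norml; lra.
Qed.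

End couplings.

Lemma le_2sqrt_of_le_tradeoff (R : rcfType) (C m D : R) : 0 <= C ->
  (forall t, 0 < t -> D <= C * t + m / t) -> D <= 2 * Num.sqrt (C * m).
Proof.
move=> C0 le_tradeoff; have [Cm_gt0|Cm_le0] := ltP 0 (C * m).
  have C_gt0 : 0 < C.
    by rewrite lt_neqAle C0 andbT; apply: contraTneq Cm_gt0 => <-; rewrite mul0r ltxx.
  have m_gt0 : 0 < m by rewrite -(pmulr_rgt0 _ C_gt0).
  have sC_gt0 : 0 < Num.sqrt C by rewrite sqrtr_gt0.
  have sm_gt0 : 0 < Num.sqrt m by rewrite sqrtr_gt0.
  apply: le_trans (le_tradeoff _ (divr_gt0 sm_gt0 sC_gt0)) _.
  rewrite sqrtrM ?(ltW C_gt0) //.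
  rewrite -{1}(sqr_sqrtr (ltW C_gt0)) -{2}(sqr_sqrtr (ltW m_gt0)).
  by rewrite le_eqVlt; apply/orP; left; apply/eqP; field; rewrite !gt_eqF.
rewrite ler0_sqrtr // mulr0; apply/ler_addgt0Pr => e e0; rewrite add0r.
have [m_le0|m_gt0] := leP m 0.
  have t0 : 0 < e / (C + 1) by rewrite divr_gt0 // ltr_pwDr.
  apply: le_trans (le_tradeoff _ t0) _.
  have : m / (e / (C + 1)) <= 0 by rewrite pmulr_lle0 // invr_gt0.
  have : C * (e / (C + 1)) <= e.
    by rewrite mulrCA ger_pMr // ler_pdivrMr ?ltr_pwDr // mul1r lerDl.
  lra.
have C_eq0 : C = 0 by apply/eqP; rewrite eq_le C0 andbT -(pmulr_lle0 C m_gt0).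
apply: le_trans (le_tradeoff _ (divr_gt0 m_gt0 e0)) _.
by rewrite C_eq0 mul0r add0r invf_div mulrC divfK ?gt_eqF.
Qed.

Lemma ler_of_forall_slack (R : realFieldType) (a rho eps t D : R) : 0 <= rho -> 0 < t ->
  (forall dl, 0 < dl -> D <= a + rho * (eps + dl) / t) -> D <= a + rho * eps / t.
Proof.
move=> rho0 t0 le_slack; apply/ler_addgt0Pr => e e0.
have dl0 : 0 < e * t / (rho + 1) by rewrite !divr_gt0 ?mulr_gt0 // ltr_pwDr.
apply: le_trans (le_slack _ dl0) _.
have : rho * (e * t / (rho + 1)) / t <= e.
  rewrite mulrCA -mulrA mulrCA mulfK ?gt_eqF // ger_pMl //.
  by rewrite ler_pdivrMr ?ltr_pwDr // mul1r lerDl.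
rewrite mulrDr mulrDl; lra.
Qed.

Theorem proposition4 (R : realType) (dO : measure_display)
  (Omega : measurableType dO) (P : probability Omega R)
  (dx k : nat) (X : Omega -> Rvec R dx) (A : Omega -> bool) (Y : Omega -> R)
  (g : Rvec R dx -> Rvec R k) (h : 'rV[R]_k -> R) (eps rho C : R) :
  measurable_fun setT X -> measurable_fun setT A -> measurable_fun setT Y ->
  (forall w, -1 <= Y w <= 1) ->
  (0 < P (A @^-1` [set false]))%E -> (0 < P (A @^-1` [set true]))%E ->
  measurable_fun setT g ->
  (W1_cond P A (g \o X) <= eps%:E)%E ->
  lipschitz_with rho h ->
  cond_density_bounded P A false (h \o g \o X) C ->
  cond_density_bounded P A true (h \o g \o X) C ->
  forall z : R,
    `| condP P A false [set w | h (g (X w)) <= z]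
       - condP P A true [set w | h (g (X w)) <= z] |
    <= 2 * Num.sqrt (C * rho * eps).
Proof.
move=> _ _ _ _ _ _ _ W1_le h_lip dens0 dens1 z.
have [rho0 _] := h_lip.
have C0 : 0 <= C by case: dens0 => f [_ [/(_ 0)/andP[f0 fC] _]]; exact: le_trans fC.
rewrite -mulrA; apply: (le_2sqrt_of_le_tradeoff C0) => t t0.
apply: (ler_of_forall_slack rho0 t0) => dl dl0.
have [pi [piZ cost_fin cost_le]] := W1_cond_le_exists_coupling W1_le dl0.
apply: le_trans (coupling_cdf_gap_le (z := z) (C := C) piZ h_lip t0 cost_fin _) _.
  by case; [exact: cond_density_bounded_band t0 dens1
           |exact: cond_density_bounded_band t0 dens0].
by rewrite lerD2l ler_pM2r ?invr_gt0 // ler_wpM2l.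
Qed.
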